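(* Let $\Gamma$ be a countably infinite residually finite group and $\{\Gamma_n\}_{n\in\mathbb N}$ a strictly decreasing sequence of finite-index normal subgroups with $\bigcap_n\Gamma_n=\{e_\Gamma\}$. Let $X=\varprojlim\Gamma/\Gamma_n$ with left translation action of $\Gamma\subseteq X$ and quotient maps $\pi_n:X\to\Gamma/\Gamma_n$. For each $n\ge2$ pick $\gamma_n\in\Gamma_{n-1}\setminus\Gamma_n$ and set $C_n=\pi_n^{-1}(\gamma_n\Gamma_n)$. Put $X_+=\bigcup_{n\ge2}C_n$ and $X_-=X\setminus(X_+\cup\{e_\Gamma\})$. Then every independence set $M\subseteq\Gamma$ for $(X_+,X_-)$ has cardinality at most $5$.
   Context: $X=\varprojlim\Gamma/\Gamma_n$ is the set of $(x_n)\in\prod_n\Gamma/\Gamma_n$ compatible under the natural maps $\Gamma/\Gamma_{n+1}\to\Gamma/\Gamma_n$, a compact metrizable group containing $\Gamma$ as a dense subgroup. A set $M\subseteq\Gamma$ is an independence set for $(A_1,A_2)$ if $\bigcap_{s\in F}s^{-1}A_{\omega(s)}\ne\emptyset$ for every nonempty finite $F\subseteq M$ and every $\omega\in\{1,2\}^F$. *)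

From Stdlib Require Import List.
Import ListNotations.
Set Implicit Arguments.

Record Group := {
  carrier :> Type;
  gmul : carrier -> carrier -> carrier;
  ginv : carrier -> carrier;
  gone : carrier;
  gmulA : forall a b c, gmul a (gmul b c) = gmul (gmul a b) c;
  gmul1l : forall a, gmul gone a = a;
  gmulVl : forall a, gmul (ginv a) a = gone
}.

Section Defs.
Variable G : Group.

Definition countably_infinite : Prop :=
  exists f : nat -> G, (forall m n, f m = f n -> m = n) /\ (forall g, exists n, f n = g).

Definition subgroup (H : G -> Prop) : Prop :=
  H (gone G) /\ (forall a b, H a -> H b -> H (gmul G a b)) /\ (forall a, H a -> H (ginv G a)).

Definition normal_subgroup (H : G -> Prop) : Prop :=
  subgroup H /\ forall g h, H h -> H (gmul G (gmul G g h) (ginv G g)).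

Definition finite_index (H : G -> Prop) : Prop :=
  exists l : list G, forall g, exists r, In r l /\ H (gmul G (ginv G r) g).

Definition residually_finite : Prop :=
  forall g, g <> gone G ->
    exists H, normal_subgroup H /\ finite_index H /\ ~ H g.

(* Points of X = inverse limit of G/Gam n, represented by sequences of
   coset representatives x n (of x n * Gam n) that are compatible. *)
Definition compatible (Gam : nat -> G -> Prop) (x : nat -> G) : Prop :=
  forall n, Gam n (gmul G (ginv G (x n)) (x (S n))).

Definition translate (s : G) (x : nat -> G) : nat -> G := fun n => gmul G s (x n).

Definition is_identity_pt (Gam : nat -> G -> Prop) (x : nat -> G) : Prop :=
  forall n, Gam n (x n).

(* Indexing: paper's Gamma_{k+1} is Gam k (paper's N = {1,2,...}); paper's
   gamma_{k+1} is gam k; paper's C_{k+1} (k+1 >= 2) is C k for k >= 1: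
   C_n = pi_n^{-1}(gamma_n Gamma_n). *)
Definition inC (Gam : nat -> G -> Prop) (gam : nat -> G) (k : nat) (x : nat -> G) : Prop :=
  Gam k (gmul G (ginv G (gam k)) (x k)).

Definition Xplus Gam gam (x : nat -> G) : Prop :=
  exists k, 1 <= k /\ inC Gam gam k x.

Definition Xminus Gam gam (x : nat -> G) : Prop :=
  ~ Xplus Gam gam x /\ ~ is_identity_pt Gam x.

(* M is an independence set for (A1, A2) (sets of points of X):
   for every nonempty finite F ⊆ M and every omega : F -> {1,2}
   (true = 1, false = 2), the intersection over s in F of s^{-1} A_{omega s}
   is nonempty. *)
Definition independence_set Gam (A1 A2 : (nat -> G) -> Prop) (M : G -> Prop) : Prop :=
  forall (F : list G) (omega : G -> bool),
    F <> [] -> (forall s, In s F -> M s) ->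
    exists x, compatible Gam x /\
      forall s, In s F ->
        (if omega s then A1 (translate s x) else A2 (translate s x)).

Definition card_le (M : G -> Prop) (n : nat) : Prop :=
  forall l : list G, NoDup l -> (forall s, In s l -> M s) -> length l <= n.

End Defs.

Arguments subgroup {G} H.
Arguments normal_subgroup {G} H.
Arguments finite_index {G} H.
Arguments compatible {G} Gam x.
Arguments translate {G} s x.
Arguments is_identity_pt {G} Gam x.
Arguments inC {G} Gam gam k x.
Arguments Xplus {G} Gam gam x.
Arguments Xminus {G} Gam gam x.
Arguments independence_set {G} Gam A1 A2 M.
Arguments card_le {G} M n.

(* For s in Gamma and x in X, s x lies in X_+ iff x_k lies in s^-1 gamma_k Gamma_k for
   some k >= 1.  Suppose s^-1 is congruent to x modulo Gamma_n for all n < m but not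
   modulo Gamma_m.  Then only k = m can witness this: for k < m it would put gamma_k in
   Gamma_k, and for k > m, since gamma_k is in Gamma_(k-1), it would make s^-1 congruent
   to x modulo Gamma_m.

   Take five distinct elements of an independence set M and let m be the first level at
   which their inverses are not all congruent.  If two of them, u and v, are congruent
   modulo Gamma_m, pick b separated from u at level m and ask for u x in X_+ and v x not:
   then x_m is congruent to u^-1, so whether b x lies in X_+ is decided at level m, and
   the opposite sign for b is not realised.  Otherwise the inverses are pairwise
   incongruent modulo Gamma_m.  Asking for t x in X_+ exactly for t <> a forces x_m into
   the coset of some j^-1 from the list, and then t^-1 gamma_m Gamma_m = j^-1 Gamma_m
   holds exactly for the t <> j with t <> a.  Doing this for two values of a gives the
   same j and contradictory requirements.  Hence |M| <= 4, and X_- may be replaced by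
   any set disjoint from X_+. *)

From Stdlib Require Import List Arith Lia Wf_nat RelationClasses Classical ClassicalEpsilon.
Import ListNotations.

Lemma avoid_two_of_three {T : Type} (a b c j1 j2 : T) :
  a <> b -> a <> c -> b <> c ->
  exists i, (i = a \/ i = b \/ i = c) /\ i <> j1 /\ i <> j2.
Proof.
  intros Hab Hac Hbc.
  destruct (classic (a = j1 \/ a = j2)) as [Ha|Ha]; [|exists a; tauto].
  destruct (classic (b = j1 \/ b = j2)) as [Hb|Hb]; [|exists b; tauto].
  exists c. destruct Ha as [<-|<-], Hb as [<-|<-]; intuition congruence.
Qed.

Section IndependenceBound.

Variable G : Group.

Local Notation "x * y" := (gmul G x y).
Local Notation "x ^-1" := (ginv G x) (at level 3, format "x ^-1").
Local Notation e := (gone G).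

Lemma mulgV (a : G) : a * a^-1 = e.
Proof.
  transitivity ((a^-1^-1 * a^-1) * (a * a^-1)).
  { rewrite gmulVl, gmul1l. reflexivity. }
  rewrite <- gmulA, (gmulA G (a^-1) a), gmulVl, gmul1l. apply gmulVl.
Qed.

Lemma mulg1 (a : G) : a * e = a.
Proof. rewrite <- (gmulVl G a), gmulA, mulgV, gmul1l. reflexivity. Qed.

Lemma invg_uniq (a b : G) : a * b = e -> a = b^-1.
Proof. intro H. rewrite <- (mulg1 a), <- (mulgV b), gmulA, H, gmul1l. reflexivity. Qed.

Lemma invgK (a : G) : a^-1^-1 = a.
Proof. symmetry. apply invg_uniq, mulgV. Qed.

Lemma invg_inj (a b : G) : a^-1 = b^-1 -> a = b.
Proof. intro H. rewrite <- (invgK a), H. apply invgK. Qed.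

Lemma invMg (a b : G) : (a * b)^-1 = b^-1 * a^-1.
Proof.
  symmetry. apply invg_uniq.
  rewrite <- gmulA, (gmulA G (a^-1) a), gmulVl, gmul1l. apply gmulVl.
Qed.

Variable Gam : nat -> G -> Prop.
Hypothesis Gam_normal : forall n, normal_subgroup (Gam n).
Hypothesis Gam_decr : forall n g, Gam (S n) g -> Gam n g.
Hypothesis Gam_trivial : forall g, (forall n, Gam n g) -> g = e.

Definition coset_eq n (g h : G) : Prop := Gam n (g^-1 * h).

#[local] Instance coset_eq_equiv n : Equivalence (coset_eq n).
Proof.
  destruct (Gam_normal n) as [[H1 [HM HV]] _]. unfold coset_eq. split.
  - intro g. rewrite gmulVl. exact H1.
  - intros g h H. apply HV in H. rewrite invMg, invgK in H. exact H.
  - intros g h k Hgh Hhk. pose proof (HM _ _ Hgh Hhk) as H.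
    rewrite <- gmulA, (gmulA G h), mulgV, gmul1l in H. exact H.
Qed.

Lemma Gam_le n n' g : n <= n' -> Gam n' g -> Gam n g.
Proof. induction 1; auto. Qed.

Lemma coset_eq_le n n' g h : n <= n' -> coset_eq n' g h -> coset_eq n g h.
Proof. apply Gam_le. Qed.

Lemma coset_eq_mulr_mem n g u : coset_eq n g (g * u) <-> Gam n u.
Proof. unfold coset_eq. rewrite gmulA, gmulVl, gmul1l. reflexivity. Qed.

Lemma coset_eqMr n g h u : coset_eq n (g * u) (h * u) <-> coset_eq n g h.
Proof.
  assert (Hconj : forall g h u, coset_eq n g h -> coset_eq n (g * u) (h * u)).
  { clear g h u. unfold coset_eq. intros g h u H.
    pose proof (proj2 (Gam_normal n) (u^-1) _ H) as Hu.
    rewrite invgK in Hu. rewrite invMg, !gmulA in *. exact Hu. }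
  split; [|apply Hconj]. intro H. apply (Hconj _ _ (u^-1)) in H.
  rewrite <- !gmulA, mulgV, !mulg1 in H. exact H.
Qed.

Lemma coset_eq_all g h : (forall n, coset_eq n g h) -> g = h.
Proof. intro H. apply invg_inj, invg_uniq, Gam_trivial, H. Qed.

Lemma compatible_coset_eq x n n' :
  compatible Gam x -> n <= n' -> coset_eq n (x n) (x n').
Proof.
  intros Hx. induction 1 as [|n' Hle IH]; [reflexivity|].
  transitivity (x n'); [exact IH|]. apply (coset_eq_le n n' _ _ Hle), Hx.
Qed.

Lemma independence_set_pattern (A1 A2 : (nat -> G) -> Prop) (N : G -> Prop) :
  independence_set Gam A1 A2 N ->
  forall (F : list G) (Q : G -> Prop), F <> [] -> (forall s, In s F -> N s) ->
  exists x, compatible Gam x /\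
    forall s, In s F -> (Q s -> A1 (translate s x)) /\ (~ Q s -> A2 (translate s x)).
Proof.
  intros HN F Q HF HFN.
  destruct (HN F (fun s => if excluded_middle_informative (Q s) then true else false) HF HFN)
    as [x [Hx HxF]].
  exists x. split; [exact Hx|]. intros s Hs. specialize (HxF s Hs).
  destruct (excluded_middle_informative (Q s)); tauto.
Qed.

Variable gam : nat -> G.
Hypothesis gam_spec : forall k, 1 <= k -> Gam (k - 1) (gam k) /\ ~ Gam k (gam k).

Definition in_translated_C (c : G) (k : nat) (x : nat -> G) : Prop :=
  1 <= k /\ coset_eq k (c * gam k) (x k).

Lemma Xplus_translate s x :
  Xplus Gam gam (translate s x) <-> exists k, in_translated_C (s^-1) k x.
Proof.
  unfold Xplus, inC, in_translated_C, translate, coset_eq.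
  split; intros [k [Hk H]]; exists k; split; auto; rewrite invMg, invgK, <- gmulA in *; auto.
Qed.

Lemma in_translated_C_transfer c c' k x :
  coset_eq k c c' -> in_translated_C c k x -> in_translated_C c' k x.
Proof.
  intros Hcc' [Hk H]. split; [exact Hk|].
  transitivity (c * gam k); [|exact H]. symmetry. apply coset_eqMr, Hcc'.
Qed.

Lemma not_in_translated_C c k x : coset_eq k c (x k) -> ~ in_translated_C c k x.
Proof.
  intros Hc [Hk H]. apply (gam_spec k Hk), (coset_eq_mulr_mem k c).
  transitivity (x k); [exact Hc|]. symmetry. exact H.
Qed.

Lemma in_translated_C_above c m k x :
  compatible Gam x -> m < k -> in_translated_C c k x -> coset_eq m c (x m).
Proof.
  intros Hx Hmk [Hk H].
  transitivity (c * gam k).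
  { apply coset_eq_mulr_mem, (Gam_le m (k - 1)); [lia|apply gam_spec, Hk]. }
  transitivity (x k).
  { apply (coset_eq_le m k); [lia|exact H]. }
  symmetry. apply compatible_coset_eq; [exact Hx|lia].
Qed.

Lemma in_translated_C_split_level c d m x :
  compatible Gam x ->
  (forall n, n < m -> coset_eq n c d) -> ~ coset_eq m c d -> coset_eq m d (x m) ->
  (exists k, in_translated_C c k x) <-> 1 <= m /\ coset_eq m (c * gam m) d.
Proof.
  intros Hx Hbelow Hsplit Hd.
  assert (Hc_below : forall n, n < m -> coset_eq n c (x n)).
  { intros n Hn. transitivity d; [apply Hbelow, Hn|].
    transitivity (x m); [apply (coset_eq_le n m); [lia|exact Hd]|].
    symmetry. apply compatible_coset_eq; [exact Hx|lia]. }
  assert (Hc_m : ~ coset_eq m c (x m)).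
  { intro H. apply Hsplit. transitivity (x m); [exact H|symmetry; exact Hd]. }
  split.
  - intros [k Hk]. destruct (lt_eq_lt_dec k m) as [[Hkm|<-]|Hmk].
    + exfalso. exact (not_in_translated_C c k x (Hc_below k Hkm) Hk).
    + destruct Hk as [Hk H]. split; [exact Hk|].
      transitivity (x k); [exact H|symmetry; exact Hd].
    + exfalso. exact (Hc_m (in_translated_C_above c m k x Hx Hmk Hk)).
  - intros [Hm H]. exists m. split; [exact Hm|]. transitivity d; assumption.
Qed.

Variable A : (nat -> G) -> Prop.
Hypothesis A_disjoint : forall x, A x -> ~ Xplus Gam gam x.
Variable M : G -> Prop.
Hypothesis M_indep : independence_set Gam (Xplus Gam gam) A M.

Lemma no_collision_at_split_level u v b m :
  M u -> M v -> M b -> u <> v -> coset_eq m (u^-1) (v^-1) ->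
  (forall n, n < m -> coset_eq n (b^-1) (u^-1)) -> ~ coset_eq m (b^-1) (u^-1) -> False.
Proof.
  intros Mu Mv Mb Huv Euv Hbelow Hsplit.
  assert (Hbu : b <> u) by (intros ->; apply Hsplit; reflexivity).
  assert (Hbv : b <> v) by (intros ->; apply Hsplit; symmetry; exact Euv).
  set (P := 1 <= m /\ coset_eq m (b^-1 * gam m) (u^-1)).
  destruct (independence_set_pattern _ _ _ M_indep [u; v; b]
              (fun s => s = u \/ (s <> v /\ ~ P))) as [x [Hx Hpat]].
  { discriminate. }
  { simpl. intros s [<-|[<-|[<-|[]]]]; assumption. }
  destruct (Hpat u ltac:(simpl; tauto)) as [Hu _].
  destruct (proj1 (Xplus_translate u x) (Hu ltac:(tauto))) as [k Hk].
  assert (Hv : ~ exists k, in_translated_C (v^-1) k x).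
  { rewrite <- Xplus_translate. apply A_disjoint, (Hpat v); simpl; [tauto|].
    intros [|[]]; congruence. }
  assert (Hmk : m < k).
  { destruct (Nat.lt_ge_cases m k) as [|Hkm]; [assumption|]. exfalso. apply Hv.
    exists k. apply (in_translated_C_transfer (u^-1)); [|exact Hk].
    apply (coset_eq_le k m); assumption. }
  assert (Hb : (exists k, in_translated_C (b^-1) k x) <-> P).
  { apply in_translated_C_split_level; [exact Hx|exact Hbelow|exact Hsplit|].
    exact (in_translated_C_above _ m k x Hx Hmk Hk). }
  rewrite <- Xplus_translate in Hb.
  destruct (Hpat b ltac:(simpl; tauto)) as [Hplus Hminus].
  destruct (classic P) as [HP|HP].
  - exact (A_disjoint _ (Hminus ltac:(tauto)) (proj2 Hb HP)).
  - exact (HP (proj1 Hb (Hplus ltac:(tauto)))).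
Qed.

Lemma separating_witness L m a t1 t2 :
  (forall s, In s L -> M s) ->
  (forall n, n < m -> forall u v, In u L -> In v L -> coset_eq n (u^-1) (v^-1)) ->
  (forall u v, In u L -> In v L -> coset_eq m (u^-1) (v^-1) -> u = v) ->
  In a L -> In t1 L -> In t2 L -> t1 <> a -> t2 <> a -> t1 <> t2 ->
  exists j, In j L /\ forall t, In t L -> t <> j ->
    (1 <= m /\ coset_eq m (t^-1 * gam m) (j^-1) <-> t <> a).
Proof.
  intros HLM Hbelow Hinj Ha Ht1 Ht2 Ht1a Ht2a Ht12.
  destruct (independence_set_pattern _ _ _ M_indep L (fun s => s <> a)) as [x [Hx Hpat]].
  { intros ->. destruct Ha. }
  { exact HLM. }
  assert (Hsign : forall t, In t L -> ((exists k, in_translated_C (t^-1) k x) <-> t <> a)).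
  { intros t Ht. rewrite <- Xplus_translate. split.
    - intros Hp ->. exact (A_disjoint _ (proj2 (Hpat a Ha) (fun H => H eq_refl)) Hp).
    - exact (proj1 (Hpat t Ht)). }
  assert (Hj : exists j, In j L /\ coset_eq m (j^-1) (x m)).
  { apply NNPP. intro Hnone.
    assert (Hat_m : forall t, In t L -> t <> a -> coset_eq m (t^-1 * gam m) (x m)).
    { intros t Ht Hta. destruct (proj2 (Hsign t Ht) Hta) as [k Hk].
      destruct (lt_eq_lt_dec k m) as [[Hkm|<-]|Hmk].
      - exfalso. apply (proj1 (Hsign a Ha)); [|reflexivity].
        exists k. apply (in_translated_C_transfer (t^-1)); [|exact Hk].
        apply Hbelow; assumption.
      - apply Hk.
      - exfalso. apply Hnone. exists t. split; [exact Ht|].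
        exact (in_translated_C_above _ m k x Hx Hmk Hk). }
    apply Ht12, Hinj; [assumption|assumption|].
    apply (coset_eqMr m _ _ (gam m)). transitivity (x m); [apply Hat_m; assumption|].
    symmetry. apply Hat_m; assumption. }
  destruct Hj as [j [Hj Hjx]]. exists j. split; [exact Hj|]. intros t Ht Htj.
  rewrite <- (Hsign t Ht). symmetry. apply in_translated_C_split_level; [exact Hx| | |exact Hjx].
  - intros n Hn. apply Hbelow; assumption.
  - intro H. apply Htj, Hinj; assumption.
Qed.

Lemma split_level_not_injective s1 s2 s3 s4 s5 m :
  let L := [s1; s2; s3; s4; s5] in
  NoDup L -> (forall s, In s L -> M s) ->
  (forall n, n < m -> forall u v, In u L -> In v L -> coset_eq n (u^-1) (v^-1)) ->
  (forall u v, In u L -> In v L -> coset_eq m (u^-1) (v^-1) -> u = v) -> False.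
Proof.
  intros L Hnd HLM Hbelow Hinj.
  apply NoDup_cons_iff in Hnd as [n1 Hnd]. apply NoDup_cons_iff in Hnd as [n2 Hnd].
  apply NoDup_cons_iff in Hnd as [n3 Hnd]. apply NoDup_cons_iff in Hnd as [n4 _].
  simpl in n1, n2, n3, n4.
  destruct (separating_witness L m s1 s3 s4) as [j1 [Hj1 Hsign1]];
    try assumption; try (simpl; tauto); try (intro; subst; tauto).
  destruct (separating_witness L m s2 s3 s4) as [j2 [Hj2 Hsign2]];
    try assumption; try (simpl; tauto); try (intro; subst; tauto).
  destruct (avoid_two_of_three s3 s4 s5 j1 j2) as [i [Hi [Hij1 Hij2]]];
    try (intro; subst; tauto).
  assert (HiL : In i L /\ i <> s1 /\ i <> s2).
  { destruct Hi as [ -> | [ -> | -> ] ]; simpl; repeat split; try tauto; intro; subst; tauto. }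
  destruct HiL as [HiL [Hi1 Hi2]].
  assert (j1 = j2) as <-.
  { destruct (proj2 (Hsign1 i HiL Hij1) Hi1) as [_ E1].
    destruct (proj2 (Hsign2 i HiL Hij2) Hi2) as [_ E2].
    apply Hinj; [assumption|assumption|]. transitivity (i^-1 * gam m); [|exact E2].
    symmetry. exact E1. }
  assert (Hs12 : s1 <> s2) by (intro; subst; tauto).
  destruct (classic (j1 = s1)) as [->|Hj1s1].
  - apply (proj1 (Hsign2 s2 ltac:(simpl; tauto) (not_eq_sym Hs12))); [|reflexivity].
    apply (Hsign1 s2 ltac:(simpl; tauto) (not_eq_sym Hs12)), not_eq_sym, Hs12.
  - apply (proj1 (Hsign1 s1 ltac:(simpl; tauto) (not_eq_sym Hj1s1))); [|reflexivity].
    apply (Hsign2 s1 ltac:(simpl; tauto) (not_eq_sym Hj1s1)), Hs12.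
Qed.

Lemma no_five_in_independence_set s1 s2 s3 s4 s5 :
  let L := [s1; s2; s3; s4; s5] in
  NoDup L -> (forall s, In s L -> M s) -> False.
Proof.
  intros L Hnd HLM.
  set (Split n := exists u v, In u L /\ In v L /\ ~ coset_eq n (u^-1) (v^-1)).
  assert (HSplit : exists n, Split n).
  { assert (Hs12 : s1^-1 <> s2^-1).
    { intro H. apply invg_inj in H. subst. inversion_clear Hnd. simpl in *. tauto. }
    destruct (not_all_ex_not _ _ (fun H => Hs12 (coset_eq_all _ _ H))) as [n Hn].
    exists n, s1, s2. simpl. tauto. }
  destruct (dec_inh_nat_subset_has_unique_least_element Split (fun n => classic (Split n)) HSplit)
    as [m [[[p [q [Hp [Hq Hpq]]]] Hleast] _]].
  assert (Hbelow : forall n, n < m -> forall u v, In u L -> In v L -> coset_eq n (u^-1) (v^-1)).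
  { intros n Hn u v Hu Hv. apply NNPP. intro H.
    enough (m <= n) by lia. apply Hleast. exists u, v. tauto. }
  destruct (classic (exists u v, In u L /\ In v L /\ u <> v /\ coset_eq m (u^-1) (v^-1)))
    as [[u [v [Hu [Hv [Huv Euv]]]]]|Hinj].
  - assert (Hb : exists b, In b L /\ ~ coset_eq m (b^-1) (u^-1)).
    { destruct (classic (coset_eq m (p^-1) (u^-1))) as [Hpu|Hpu]; [|exists p; tauto].
      exists q. split; [exact Hq|]. intro Hqu. apply Hpq.
      transitivity (u^-1); [exact Hpu|symmetry; exact Hqu]. }
    destruct Hb as [b [Hb Hbu]].
    apply (no_collision_at_split_level u v b m); auto.
  - apply (split_level_not_injective s1 s2 s3 s4 s5 m); auto.
    intros u v Hu Hv Huv. apply NNPP. intro H. apply Hinj. exists u, v. tauto.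
Qed.

Lemma independence_set_card_le4 : card_le M 4.
Proof.
  intros l Hnd Hl. destruct (Nat.le_gt_cases (length l) 4) as [|Hlen]; [assumption|].
  exfalso. destruct l as [|s1 [|s2 [|s3 [|s4 [|s5 rest]]]]]; simpl in Hlen; try lia.
  apply (no_five_in_independence_set s1 s2 s3 s4 s5).
  - exact (NoDup_app_remove_r [s1; s2; s3; s4; s5] rest Hnd).
  - intros s Hs. apply Hl. simpl in *. tauto.
Qed.

End IndependenceBound.

Theorem lemma4p2 (G : Group) (Gam : nat -> G -> Prop) (gam : nat -> G) :
  countably_infinite G ->
  residually_finite G ->
  (forall n, normal_subgroup (Gam n)) ->
  (forall n, finite_index (Gam n)) ->
  (forall n g, Gam (S n) g -> Gam n g) ->
  (forall n, exists g, Gam n g /\ ~ Gam (S n) g) ->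
  (forall g, (forall n, Gam n g) -> g = gone G) ->
  (forall k, 1 <= k -> Gam (k - 1) (gam k) /\ ~ Gam k (gam k)) ->
  forall M : G -> Prop,
    independence_set Gam (Xplus Gam gam) (Xminus Gam gam) M ->
    card_le M 5.
Proof.
  intros _ _ Gam_normal _ Gam_decr _ Gam_trivial gam_spec M M_indep l Hnd Hl.
  enough (length l <= 4) by lia.
  refine (independence_set_card_le4 G Gam Gam_normal Gam_decr Gam_trivial gam gam_spec
            (Xminus Gam gam) _ M M_indep l Hnd Hl).
  intros x [Hx _]. exact Hx.
Qed.
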